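(* Fix an integer $J\ge 2$, a finite set $\mathcal{G}$ of group labels, and strictly decreasing positive weights $w_1>\cdots>w_J>0$. Let $(\mathbf{Y},\mathbf{G})$ be any random vector with $\mathbf{Y}=(\mathbf{Y}_1,\dots,\mathbf{Y}_J)\in\mathbb{R}^J$ integrable and $\mathbf{G}=(\mathbf{G}_1,\dots,\mathbf{G}_J)\in\mathcal{G}^J$, and suppose that for all $1\le a<b\le J$ and all $g\in\mathcal{G}^J$ with $P(\mathbf{G}=g)>0$, $$E[\mathbf{Y}_a-\mathbf{Y}_b\mid \mathbf{G}=g]\ge 0.$$ Then there exist a probability space carrying candidate features $X_1,\dots,X_J$, group statuses $G_1,\dots,G_J\in\mathcal{G}$ and integrable outcomes $Y_1,\dots,Y_J$, together with a ranking $j(\cdot)$ (a bijection of $\{1,\dots,J\}$ that is a measurable function of $\mathcal{I}=\{(X_k,G_k)\}_{k=1}^J$) such that (i) for almost every realization of $\mathcal{I}$, $j(\cdot)$ maximizes $E\left[\sum_{r=1}^J w_rY_{j(r)}\,\middle|\,\mathcal{I}\right]$ over all bijections of $\{1,\dots,J\}$, and (ii) the rank-ordered vector $\big((Y_{j(1)},\dots,Y_{j(J)}),(G_{j(1)},\dots,G_{j(J)})\big)$ has the same joint distribution as $(\mathbf{Y},\mathbf{G})$.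
   Context: Here $j(r)$ denotes the index of the candidate placed in rank $r$ (rank 1 is best). A Ranker choosing $j(\cdot)$ as in (i) is called unbiased. The statement says that the moment inequalities above are the only testable implication of unbiasedness for an Auditor who observes only rank-ordered outcomes and group statuses. *)

From HB Require Import structures.
From mathcomp Require Import all_boot all_order all_algebra all_fingroup.
From mathcomp Require Import all_classical all_reals all_analysis.
Set Implicit Arguments. Unset Strict Implicit. Unset Printing Implicit Defensive.
Import Order.TTheory GRing.Theory Num.Theory.
Import numFieldNormedType.Exports.
Local Open Scope classical_set_scope.
Local Open Scope ring_scope.

Definition cexp_event {d} {T : measurableType d} {R : realType}
  (P : probability T R) (Z : T -> R) (A : set T) : R :=
  fine (\int[P]_(x in A) (Z x)%:E)%E / fine (P A).

Definition sigma_info {d} {T : measurableType d} {dX} {TX : measurableType dX}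
  {Gr : finType} {J : nat} (X : 'I_J -> T -> TX) (G : 'I_J -> T -> Gr)
  : set (set T) :=
  <<s [set B | exists k A, measurable A /\ B = X k @^-1` A] `|`
      [set B | exists k x, B = G k @^-1` [set x]] >>.

Definition is_cond_exp {d} {T : measurableType d} {R : realType}
  (P : probability T R) (F : set (set T)) (Z H : T -> R) : Prop :=
  (forall B : set R, measurable B -> F (H @^-1` B)) /\
  P.-integrable setT (fun x => (H x)%:E) /\
  (forall A, F A -> (\int[P]_(x in A) (Z x)%:E = \int[P]_(x in A) (H x)%:E)%E).

Definition joint_sigma {R : realType} {Gr : finType} {J : nat}
  : set (set (('I_J -> R) * ('I_J -> Gr))) :=
  <<s [set B | exists k (A : set R), measurable A /\ B = [set p | A (p.1 k)]] `|`
      [set B | exists k x, B = [set p | p.2 k = x]] >>.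

Definition same_law {R : realType} {Gr : finType} {J : nat}
  {d} {T : measurableType d} (P : probability T R)
  (V : T -> ('I_J -> R) * ('I_J -> Gr))
  {d0} {T0 : measurableType d0} (P0 : probability T0 R)
  (V0 : T0 -> ('I_J -> R) * ('I_J -> Gr)) : Prop :=
  forall B, (@joint_sigma R Gr J) B ->
    P (V @^-1` B) = P0 (V0 @^-1` B).

From HB Require Import structures.
From mathcomp Require Import all_boot all_order all_algebra all_fingroup.
From mathcomp Require Import all_classical all_reals all_analysis.
Import Order.TTheory GRing.Theory Num.Theory.
Import numFieldNormedType.Exports.
Local Open Scope classical_set_scope.
Local Open Scope ring_scope.

(* Take the Auditor's probability space itself, give the Ranker no features
   beyond the group statuses, and let it keep the given order (j = identity),
   so that (ii) is immediate.  Conditioning on the group statuses is then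
   conditioning on the finitely many atoms {G = g}: on an atom of positive
   probability any version of E[sum_r w_r Y_sigma(r) | I] equals
   sum_r w_r m_sigma(r) with m_k = E[Y_k | G = g], and m is nonincreasing by
   hypothesis.  The rearrangement inequality (via Abel summation) shows that the
   identity is optimal there, and the null atoms form a null set. *)

Lemma abel_summation (R : pzRingType) n (W : nat -> R) (x : 'I_n -> R) :
  W n = 0 ->
  \sum_(r < n) W r * x r
    = \sum_(l < n) (W l - W l.+1) * \sum_(r < n | (r <= l)%N) x r.
Proof.
move=> Wn0.
have WE (r : 'I_n) : W r = \sum_(l < n | (r <= l)%N) (W l - W l.+1).
  have -> : \sum_(l < n | (r <= l)%N) (W l - W l.+1)
           = \sum_(r <= l < n) (W l - W l.+1) by rewrite big_geq_mkord.
  rewrite -[RHS]opprK -sumrN.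
  under eq_bigr do rewrite opprB.
  by rewrite telescope_sumr ?Wn0 ?opprB ?subr0 // ltnW.
under eq_bigr do rewrite WE mulr_suml big_mkcond.
rewrite exchange_big; apply: eq_bigr => l _ /=.
rewrite mulr_sumr [RHS]big_mkcond; apply: eq_bigr => r _ /=.
by case: ifP; rewrite ?mul0r ?mulr0.
Qed.

Lemma prefix_sum_perm_le (R : numDomainType) n (m : 'I_n -> R)
    (s : {perm 'I_n}) (l : 'I_n) :
  (forall a b : 'I_n, (a < b)%N -> m b <= m a) ->
  \sum_(r < n | (r <= l)%N) m (s r) <= \sum_(r < n | (r <= l)%N) m r.
Proof.
move=> m_anti.
rewrite -(lerD2r (- \sum_(r < n | (r <= l)%N) m l)) -!sumrB.
rewrite big_mkcond (reindex_inj (@perm_inj _ s^-1)) [leRHS]big_mkcond /=.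
apply: ler_sum => i _; rewrite permKV.
case: ifP => sil; case: ifP => il //.
- by rewrite subr_le0 m_anti // ltnNge il.
- rewrite subr_ge0; move: il; rewrite leq_eqVlt => /orP[/eqP/val_inj->//|].
  exact: m_anti.
Qed.

Lemma rearrangement_le (R : numDomainType) n (w m : 'I_n -> R)
    (s : {perm 'I_n}) :
  (forall r, 0 <= w r) -> (forall r r' : 'I_n, (r < r')%N -> w r' <= w r) ->
  (forall a b : 'I_n, (a < b)%N -> m b <= m a) ->
  \sum_r w r * m (s r) <= \sum_r w r * m r.
Proof.
move=> w_ge0 w_anti m_anti.
pose W i := if insub i is Some r then w r else 0.
have WE (r : 'I_n) : w r = W r by rewrite /W valK.
have Wn0 : W n = 0 by rewrite /W insubF ?ltnn.
under eq_bigr do rewrite WE.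
under [leRHS]eq_bigr do rewrite WE.
rewrite !abel_summation //; apply: ler_sum => l _.
apply: ler_wpM2l; last exact: prefix_sum_perm_le.
rewrite subr_ge0 -WE /W; case: insubP => [r _ rl|_ //].
by apply: w_anti; rewrite rl.
Qed.

Lemma integral_lincomb_EFin {d} {T : measurableType d} {R : realType}
    (mu : {measure set T -> \bar R}) (A : set T) n (c : 'I_n -> R)
    (Y : 'I_n -> T -> R) :
  measurable A -> (forall r, mu.-integrable A (fun x => (Y r x)%:E)) ->
  (\int[mu]_(x in A) (\sum_r c r * Y r x)%:E
    = (\sum_r c r * fine (\int[mu]_(x in A) (Y r x)%:E))%:E)%E.
Proof.
move=> mA intY; rewrite -sumEFin.
under eq_integral do rewrite -sumEFin.
rewrite integral_sum //; last first.
  by move=> r; under eq_fun do rewrite EFinM; exact: integrableZl.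
apply: eq_bigr => r _; rewrite EFinM fineK; last exact: integrable_fin_num.
under eq_integral do rewrite EFinM.
exact: integralZl.
Qed.

Section cexp_event_linear.
Context {d} {T : measurableType d} {R : realType} (P : probability T R).
Variables (A : set T) (mA : measurable A).

Lemma cexp_event_lincomb n (c : 'I_n -> R) (Y : 'I_n -> T -> R) :
  (forall r, P.-integrable A (fun x => (Y r x)%:E)) ->
  cexp_event P (fun t => \sum_r c r * Y r t) A
    = \sum_r c r * cexp_event P (Y r) A.
Proof.
move=> intY; rewrite /cexp_event integral_lincomb_EFin //= mulr_suml.
by apply: eq_bigr => r _; rewrite mulrA.
Qed.

Lemma cexp_eventB (Y1 Y2 : T -> R) :
  P.-integrable A (fun x => (Y1 x)%:E) -> P.-integrable A (fun x => (Y2 x)%:E) ->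
  cexp_event P (fun t => Y1 t - Y2 t) A
    = cexp_event P Y1 A - cexp_event P Y2 A.
Proof.
move=> intY1 intY2; rewrite /cexp_event -mulrBl.
under eq_integral do rewrite EFinB.
by rewrite integralB_EFin // fineB //; exact: integrable_fin_num.
Qed.

End cexp_event_linear.

Section group_atom.
Context {d} {T : measurableType d} {R : realType} {Gr : finType} {J : nat}.
Variable G : 'I_J -> T -> Gr.

Definition group_atom (g : 'I_J -> Gr) : set T := [set t | G^~ t = g].

Lemma group_atomE g :
  group_atom g = \bigcap_(k in [set: 'I_J]) G k @^-1` [set g k].
Proof.
apply/seteqP; split => [t <- k _ //|t Gt].
by apply/funext => k; exact: Gt.
Qed.

Hypothesis mG : forall k x, measurable (G k @^-1` [set x]).

Lemma measurable_group_atom g : measurable (group_atom g).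
Proof.
by rewrite group_atomE; apply: fin_bigcap_measurable.
Qed.

Lemma negligible_null_group_atoms (mu : {measure set T -> \bar R}) :
  mu.-negligible [set t | mu (group_atom (G^~ t)) = 0%E].
Proof.
pose N := \big[setU/set0]_(f <- enum {ffun 'I_J -> Gr}
                           | mu (group_atom f) == 0%E) group_atom f.
apply: (@negligibleS _ _ _ mu N).
  move=> t /= mu0; rewrite /N -bigcup_seq_cond.
  have Gt : [ffun k => G k t] = G^~ t :> ('I_J -> Gr).
    by apply/funext => k; rewrite ffunE.
  by exists [ffun k => G k t]; rewrite /= ?mem_enum Gt ?mu0 ?eqxx.
apply: (big_ind (fun A => mu.-negligible A)).
- exact: negligible_set0.
- exact: negligibleU.
- by move=> f /eqP mu0; apply/negligibleP => //; exact: measurable_group_atom.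
Qed.

Context {dX : measure_display} {TX : measurableType dX}.
Variable X : 'I_J -> T -> TX.

Lemma sigma_info_group_atom g : sigma_info X G (group_atom g).
Proof.
rewrite group_atomE.
apply: (fin_bigcap_measurable (T := g_sigma_algebraType _)) => // k _.
by apply: (sub_smallest (@subset_refl _ _)); right; exists k, (g k).
Qed.

Lemma sigma_info_cst (b : Prop) : sigma_info X G (fun _ => b).
Proof.
have [hb|nb] := pselect b.
  have -> : (fun _ => b) = setT :> set T by apply/seteqP; split.
  exact: (@measurableT _ (g_sigma_algebraType _)).
have -> : (fun _ => b) = set0 :> set T by apply/seteqP; split.
exact: (@measurable0 _ (g_sigma_algebraType _)).
Qed.

Hypothesis X_factors : forall k t t', G^~ t = G^~ t' -> X k t = X k t'.

Lemma sigma_info_saturated A t t' :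
  sigma_info X G A -> G^~ t = G^~ t' -> A t -> A t'.
Proof.
pose S := [set B : set T | forall t t', G^~ t = G^~ t' -> B t -> B t'].
suff SS : sigma_info X G `<=` S by move=> /SS; apply.
apply: smallest_sub => [|B [[k [C [_ ->]]]|[k [x ->]]] s s' Gss'].
- split.
  + by move=> s s' _ [].
  + by move=> B satB s s' Gss' [_ nBs]; split=> // Bs'; apply/nBs/(satB s').
  + by move=> F satF s s' Gss' [n _ Fns]; exists n => //; exact: (satF n s).
- by rewrite /preimage /= (X_factors k _ _ Gss').
- by rewrite /preimage /= -[G k s]/(G^~ s k) -[G k s']/(G^~ s' k) Gss'.
Qed.

Lemma cond_exp_group_atom (P : probability T R) (Z K : T -> R) t :
  is_cond_exp P (sigma_info X G) Z K -> (0 < P (group_atom (G^~ t)))%E ->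
  K t = cexp_event P Z (group_atom (G^~ t)).
Proof.
move=> [mK [_ eqK]] Apos; set A := group_atom (G^~ t).
have mA : measurable A := measurable_group_atom _.
have KA x : A x -> K x = K t.
  move=> Ax; apply: (sigma_info_saturated (K @^-1` [set K t]) t x) => //.
  exact: mK (measurable_set1 (K t)).
have PA_fin : P A \is a fin_num by apply: fin_num_measure.
have PA_gt0 : 0 < fine (P A) by apply: fine_gt0; rewrite Apos ltey_eq PA_fin.
rewrite /cexp_event eqK; last exact: sigma_info_group_atom.
rewrite (eq_integral (cst (K t)%:E)); last by move=> x /[!inE] /KA ->.
by rewrite integral_cst //= -(fineK PA_fin) -EFinM /= mulfK ?gt_eqF.
Qed.

End group_atom.

Arguments measurable_group_atom {d T Gr J G}.
Arguments negligible_null_group_atoms {d T R Gr J G}.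
Arguments cond_exp_group_atom {d T R Gr J G} mG {dX TX X} X_factors {P Z K t}.

Theorem proposition2 (R : realType) (J : nat) (Gr : finType)
  (w : 'I_J -> R)
  (d0 : measure_display) (T0 : measurableType d0) (P0 : probability T0 R)
  (Y0 : 'I_J -> T0 -> R) (G0 : 'I_J -> T0 -> Gr) :
  (2 <= J)%N ->
  (forall r s : 'I_J, (r < s)%N -> w s < w r) ->
  (forall r, 0 < w r) ->
  (forall k, P0.-integrable setT (fun x => (Y0 k x)%:E)) ->
  (forall k x, measurable (G0 k @^-1` [set x])) ->
  (forall (a b : 'I_J) (g : 'I_J -> Gr), (a < b)%N ->
     (0 < P0 [set t | G0^~ t = g])%E ->
     0 <= cexp_event P0 (fun t => Y0 a t - Y0 b t) [set t | G0^~ t = g]) ->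
  exists (d : measure_display) (T : measurableType d) (P : probability T R)
    (dX : measure_display) (TX : measurableType dX)
    (X : 'I_J -> T -> TX) (G : 'I_J -> T -> Gr) (Y : 'I_J -> T -> R)
    (j : T -> {perm 'I_J}),
    (forall k, measurable_fun setT (X k)) /\
        (forall k x, measurable (G k @^-1` [set x])) /\
        (forall k, P.-integrable setT (fun t => (Y k t)%:E)) /\
        (* j is a measurable function of I = {(X_k, G_k)}_k *)
        (forall tau : {perm 'I_J}, sigma_info X G [set t | j t = tau]) /\
        (* (i) j maximizes E[sum_r w_r Y_{j(r)} | I] over all bijections, a.s. *)
        (forall (H : T -> R) (h : {perm 'I_J} -> T -> R),
           is_cond_exp P (sigma_info X G)
             (fun t => \sum_(r < J) w r * Y (j t r) t) H ->
           (forall sigma : {perm 'I_J},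
              is_cond_exp P (sigma_info X G)
                (fun t => \sum_(r < J) w r * Y (sigma r) t) (h sigma)) ->
           {ae P, forall t, forall sigma : {perm 'I_J}, h sigma t <= H t}) /\
        (* (ii) the rank-ordered vector has the law of (Y0, G0) *)
        same_law P (fun t => ((fun r => Y (j t r) t), (fun r => G (j t r) t)))
                 P0 (fun t => ((fun k => Y0 k t), (fun k => G0 k t))).
Proof.
move=> _ w_anti w_gt0 intY mG Y_means.
pose X (k : 'I_J) (t : T0) : R := 0.
have X_factors k t t' : G0^~ t = G0^~ t' -> X k t = X k t' by [].
have intYA g k : P0.-integrable (group_atom G0 g) (fun t => (Y0 k t)%:E).
  exact: integrableS measurableT (measurable_group_atom mG g) _ (intY k).
exists d0, T0, P0, _, R, X, G0, Y0, (fun _ => 1%g).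
split; first by move=> k; exact: measurable_cst.
do 2 split => //; split; first by move=> tau; exact: sigma_info_cst.
split; last first.
  move=> B _; congr (P0 (_ @^-1` B)).
  by apply/funext => t; congr pair; apply/funext => r; rewrite perm1.
move=> H h cH ch; apply: negligibleS (negligible_null_group_atoms mG P0).
move=> t /= not_opt; set A := group_atom G0 (G0^~ t).
have [//|PA_neq0] := eqVneq (P0 A) 0%E; exfalso; apply: not_opt => s.
have PA_gt0 : (0 < P0 A)%E by rewrite lt0e PA_neq0 measure_ge0.
have mA : measurable A := measurable_group_atom mG _.
rewrite (cond_exp_group_atom mG X_factors (ch s) PA_gt0).
rewrite (cond_exp_group_atom mG X_factors cH PA_gt0).
rewrite !cexp_event_lincomb //.
under [leRHS]eq_bigr do rewrite perm1.
apply: rearrangement_le => [r|r r' /w_anti/ltW //|a b ab]; first exact/ltW.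
by rewrite -subr_ge0 -cexp_eventB //; [exact: Y_means | exact: intYA ..].
Qed.
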